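(* Let $\Phi:\mathbb{R}\to\mathbb{R}$, $\Phi(x)=W^{(2)}\mathrm{ReLU}\big(W^{(1)}\mathrm{ReLU}(W^{(0)}x+b^{(0)})+b^{(1)}\big)+b^{(2)}$, where $W^{(0)},W^{(1)}\sim\mathcal{N}(0,2)$, $W^{(2)}\sim\mathcal{N}(0,1)$, $b^{(\ell)}\sim\mathcal{D}^{(\ell)}$ for arbitrary probability distributions $\mathcal{D}^{(\ell)}$ on $\mathbb{R}$ ($\ell=0,1,2$), all jointly independent real random variables. Assume $\mathbb{P}(b^{(1)}\le 0)>0$. Let $\widetilde{\Phi}(x)=W^{(2)}(W^{(1)}(W^{(0)}x+b^{(0)})+b^{(1)})+b^{(2)}$. Then with positive probability $\mathrm{Lip}(\Phi)=0<\mathrm{Lip}(\widetilde{\Phi})$.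
   Context: $\mathrm{ReLU}(t)=\max\{0,t\}$; $\mathrm{Lip}(f)=\sup_{x\neq y}|f(x)-f(y)|/|x-y|$. This is a ReLU network of width $N=1$ with $L=2$ hidden layers, with the variance $2/N=2$ for the first two weight layers. *)

From HB Require Import structures.
From mathcomp Require Import all_boot all_order all_algebra.
From mathcomp Require Import all_classical all_reals all_analysis.
Set Implicit Arguments. Unset Strict Implicit. Unset Printing Implicit Defensive.
Import Order.TTheory GRing.Theory Num.Theory.
Local Open Scope classical_set_scope.
Local Open Scope ring_scope.

Definition ReLU {R : realType} (t : R) : R := Num.max 0 t.

Definition Lip {R : realType} (f : R -> R) : \bar R :=
  ereal_sup [set e : \bar R | exists x y : R, x != y /\
                e = (`|f x - f y| / `|x - y|)%:E].

Definition Phi {R : realType} (W0 W1 W2 b0 b1 b2 : R) (x : R) : R :=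
  W2 * ReLU (W1 * ReLU (W0 * x + b0) + b1) + b2.

Definition Phi_lin {R : realType} (W0 W1 W2 b0 b1 b2 : R) (x : R) : R :=
  W2 * (W1 * (W0 * x + b0) + b1) + b2.

(* (mutual) independence of six real random variables: the product rule
   for every choice of measurable sets (taking A_i = setT recovers every
   subfamily). *)
Definition independent6 {d} {T : measurableType d} {R : realType}
  (P : probability T R) (X0 X1 X2 X3 X4 X5 : T -> R) : Prop :=
  forall A0 A1 A2 A3 A4 A5 : set R,
    measurable A0 -> measurable A1 -> measurable A2 ->
    measurable A3 -> measurable A4 -> measurable A5 ->
    P (X0 @^-1` A0 `&` X1 @^-1` A1 `&` X2 @^-1` A2 `&`
       X3 @^-1` A3 `&` X4 @^-1` A4 `&` X5 @^-1` A5) =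
    (P (X0 @^-1` A0) * P (X1 @^-1` A1) * P (X2 @^-1` A2) *
     P (X3 @^-1` A3) * P (X4 @^-1` A4) * P (X5 @^-1` A5))%E.

Definition has_law {d} {T : measurableType d} {R : realType}
  (P : probability T R) (X : T -> R) (mu : set R -> \bar R) : Prop :=
  forall A : set R, measurable A -> P (X @^-1` A) = mu A.

From HB Require Import structures.
From mathcomp Require Import all_boot all_order all_algebra.
From mathcomp Require Import all_classical all_reals all_analysis.
From mathcomp Require Import measurable_realfun normal_distribution lra ring.
Import Order.TTheory GRing.Theory Num.Theory.
Local Open Scope classical_set_scope.
Local Open Scope ring_scope.

(* If W1 < 0 and b1 <= 0, the second hidden neuron receives W1 times a
   nonnegative number plus b1 <= 0, so it is dead and Phi is the constant b2;
   the linear network is then the affine map with slope W2 W1 W0 <> 0.  All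
   these sign conditions hold with positive probability, by independence and
   because a centred normal law charges [-1, 0[. *)

Lemma Lip_cst (R : realType) (c : R) : Lip (cst c) = 0%E.
Proof.
rewrite /Lip (_ : [set e | _] = [set 0%E]); first exact: ereal_sup1.
apply/seteqP; split => e /=.
  by move=> [x [y [_ ->]]]; rewrite subrr normr0 mul0r.
move=> ->; exists 0, 1; split; first by rewrite eq_sym oner_eq0.
by rewrite subrr normr0 mul0r.
Qed.

Lemma Lip_gt0 (R : realType) (f : R -> R) (x y : R) :
  f x != f y -> (0 < Lip f)%E.
Proof.
move=> fxy; have xy : x != y by apply: contraNneq fxy => ->.
apply: (@lt_le_trans _ _ (`|f x - f y| / `|x - y|)%:E).
  by rewrite lte_fin divr_gt0 ?normr_gt0 ?subr_eq0.
by apply: ereal_sup_ubound; exists x, y.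
Qed.

Lemma Phi_lin_affine (R : realType) (W0 W1 W2 b0 b1 b2 x : R) :
  Phi_lin W0 W1 W2 b0 b1 b2 x = W2 * W1 * W0 * x + Phi_lin W0 W1 W2 b0 b1 b2 0.
Proof. by rewrite /Phi_lin; ring. Qed.

Lemma Lip_Phi_lin_gt0 (R : realType) (W0 W1 W2 b0 b1 b2 : R) :
  W0 != 0 -> W1 != 0 -> W2 != 0 -> (0 < Lip (Phi_lin W0 W1 W2 b0 b1 b2))%E.
Proof.
move=> W0n0 W1n0 W2n0; apply: (@Lip_gt0 _ _ 1 0).
rewrite Phi_lin_affine [X in _ != X]Phi_lin_affine mulr1 mulr0 add0r.
by rewrite -subr_eq0 addrK !mulf_neq0.
Qed.

Lemma Phi_eq_cst (R : realType) (W0 W1 W2 b0 b1 b2 : R) :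
  W1 <= 0 -> b1 <= 0 -> Phi W0 W1 W2 b0 b1 b2 = cst b2.
Proof.
move=> W1le0 b1le0; apply/funext => x; rewrite /Phi.
have relu_ge0 : 0 <= ReLU (W0 * x + b0) by rewrite /ReLU le_max lexx.
have -> : ReLU (W1 * ReLU (W0 * x + b0) + b1) = 0.
  by apply/max_idPl; have := mulr_le0_ge0 W1le0 relu_ge0; lra.
by rewrite mulr0 add0r.
Qed.

Lemma Lip_Phi_eq0 (R : realType) (W0 W1 W2 b0 b1 b2 : R) :
  W1 <= 0 -> b1 <= 0 -> Lip (Phi W0 W1 W2 b0 b1 b2) = 0%E.
Proof. by move=> W1le0 b1le0; rewrite Phi_eq_cst // Lip_cst. Qed.

Lemma sqr_dist_le_itv_ends (R : realFieldType) (m a b x : R) :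
  a <= x -> x <= b -> (x - m) ^+ 2 <= (a - m) ^+ 2 + (b - m) ^+ 2.
Proof.
move=> ax xb; have [mx|xm] := leP m x.
- have : 0 <= (b - x) * (b + x - m - m) by rewrite mulr_ge0 //; lra.
  have := sqr_ge0 (a - m); rewrite !expr2; nra.
- have : 0 <= (x - a) * (m - a + m - x) by rewrite mulr_ge0 //; lra.
  have := sqr_ge0 (b - m); rewrite !expr2; nra.
Qed.

Lemma normal_prob_itv_gt0 (R : realType) (m s a b : R) : s != 0 -> a < b ->
  (0 < normal_prob m s `[a, b[%classic)%E.
Proof.
move=> s0 ab.
set c := normal_peak s * expR (- ((a - m) ^+ 2 + (b - m) ^+ 2) / (s ^+ 2 *+ 2)).
have c0 : 0 < c by rewrite mulr_gt0 ?normal_peak_gt0 ?expR_gt0.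
apply: (@lt_le_trans _ _ (\int[lebesgue_measure]_(x in `[a, b[%classic) (cst c%:E) x)%E).
  rewrite integral_cst // [X in (_ * X)%E]lebesgue_measure_itv /= lte_fin ab.
  by rewrite mule_gt0 // lte_fin subr_gt0.
apply: ge0_le_integral => //.
- by move=> x _; rewrite lee_fin ltW.
- apply/measurable_EFinP.
  exact: measurable_funS (measurable_normal_pdf m s).
move=> x; rewrite /= in_itv /= => /andP[ax xb].
rewrite lee_fin /normal_pdf (negbTE s0) /c /normal_fun.
rewrite ler_pM2l ?normal_peak_gt0 // ler_expR !mulNr lerN2 ler_pM2r; last first.
  by rewrite invr_gt0 mulrn_wgt0 // exprn_even_gt0.
exact: sqr_dist_le_itv_ends (ltW xb).
Qed.

Theorem proposition4p9 (R : realType) (d : measure_display) (T : measurableType d)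
  (P : probability T R)
  (W0 W1 W2 b0 b1 b2 : {RV P >-> R})
  (D0 D1 D2 : probability R R) :
  has_law P W0 (normal_prob 0 (Num.sqrt 2)) ->
  has_law P W1 (normal_prob 0 (Num.sqrt 2)) ->
  has_law P W2 (normal_prob 0 1) ->
  has_law P b0 D0 -> has_law P b1 D1 -> has_law P b2 D2 ->
  independent6 P W0 W1 W2 b0 b1 b2 ->
  (0 < P [set w | (b1 w <= 0)%R])%E ->
  exists E : set T, [/\ measurable E, (0 < P E)%E &
    forall w, E w ->
      Lip (Phi (W0 w) (W1 w) (W2 w) (b0 w) (b1 w) (b2 w)) = 0%E /\
      (0 < Lip (Phi_lin (W0 w) (W1 w) (W2 w) (b0 w) (b1 w) (b2 w)))%E].
Proof.
move=> lawW0 lawW1 lawW2 _ _ _ indep Pb1.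
pose I := `[(-1)%R, 0%R[%classic : set R.
pose E := W0 @^-1` I `&` W1 @^-1` I `&` W2 @^-1` I `&`
          b0 @^-1` setT `&` b1 @^-1` `]-oo, 0%R]%classic `&` b2 @^-1` setT.
have mI : measurable I by exact: measurable_itv.
have mNeg : measurable (`]-oo, 0%R]%classic : set R) by exact: measurable_itv.
have normal_I s : s != 0 -> (0 < normal_prob 0 s I)%E.
  by move=> s0; apply: normal_prob_itv_gt0; rewrite ?ltrN10.
have sqrt2_neq0 : Num.sqrt (2 : R) != 0 by rewrite gt_eqF // sqrtr_gt0 ltr0n.
exists E; split.
- by apply: measurableI; [repeat apply: measurableI|]; apply: measurable_funPTI.
- rewrite /E indep //.
  rewrite !preimage_setT probability_setT !mule1 lawW0 // lawW1 // lawW2 //.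
  have -> : b1 @^-1` `]-oo, 0%R]%classic = [set w | b1 w <= 0].
    by apply/seteqP; split => w /=; rewrite in_itv.
  by rewrite !mule_gt0 // normal_I // oner_neq0.
- move=> w; rewrite /E /I /= !in_itv /=.
  move=> [[[[[/andP[_ W0lt0] /andP[_ W1lt0]] /andP[_ W2lt0]] _] b1le0] _].
  split; first by rewrite Lip_Phi_eq0 // ltW.
  by rewrite Lip_Phi_lin_gt0 // lt_eqF.
Qed.
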